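(* Let $q\ge 2$ and $n\ge 1$ be integers, $N=\{1,\dots,n\}$, $F^c=\{-\tfrac{q-1}{2},-\tfrac{q-3}{2},\dots,\tfrac{q-3}{2},\tfrac{q-1}{2}\}$ and $\Omega=(F^c)^N$. For each subset $A\subset N$ with $|A|\ge 2$ let $J_A\ge 0$ be given, and define $H_\gamma=-\sum_{A}J_A\,\delta_{(\sigma^A)_\gamma}$, where for $A=\{i_1,\dots,i_k\}$, $\delta_{(\sigma^A)_\gamma}=1$ if $(\sigma_{i_1})_\gamma=\dots=(\sigma_{i_k})_\gamma$ and $0$ otherwise. Let $Z_\gamma=\exp(-H_\gamma)$, $Z=\sum_{\gamma\in\Omega}Z_\gamma$, $P(\gamma)=Z_\gamma/Z$, and $\langle X\rangle=\sum_\gamma X(\gamma)P(\gamma)$. For a finite list $R$ of elements of $N$ (repetitions allowed) set $\sigma^R=\prod_{i\in R}\sigma_i$ (product with multiplicity, $\sigma^\emptyset\equiv 1$), where $\sigma_i(\gamma)=(\sigma_i)_\gamma$ is the $i$-th coordinate of $\gamma$. Then for any two such lists $R$ and $S$, $$\langle\sigma^R\sigma^S\rangle-\langle\sigma^R\rangle\langle\sigma^S\rangle\ge 0.$$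
   Context: This is a generalized ferromagnetic $q$-state Potts model with multi-spin interactions, with spin values taken in the centered set $F^c$ (equivalently, $\sigma_i$ is the Potts spin in $\{1,\dots,q\}$ minus $(q+1)/2$); the inverse temperature is set to $1$. The paper formally also permits $J_A=+\infty$. *)

From HB Require Import structures.
From mathcomp Require Import all_boot all_order all_algebra.
From mathcomp Require Import all_classical all_reals all_analysis.
Set Implicit Arguments. Unset Strict Implicit. Unset Printing Implicit Defensive.
Import Order.TTheory GRing.Theory Num.Theory.
Local Open Scope ring_scope.

Section Potts.
Variables (R : realType) (q n : nat).

Definition config := {ffun 'I_n -> 'I_q}.

(* centered spin value: k - (q-1)/2, ranging over F^c *)
Definition spin (k : 'I_q) : R := k%:R - (q%:R - 1) / 2.

Definition sigma (i : 'I_n) (g : config) : R := spin (g i).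

Definition delta (A : {set 'I_n}) (g : config) : R :=
  if [forall i in A, forall j in A, sigma i g == sigma j g] then 1 else 0.

Variable J : {set 'I_n} -> R.

Definition Ham (g : config) : R :=
  - \sum_(A : {set 'I_n} | (1 < #|A|)%N) J A * delta A g.

Definition Zg (g : config) : R := expR (- Ham g).
Definition Zpart : R := \sum_(g : config) Zg g.
Definition Prob (g : config) : R := Zg g / Zpart.
Definition expect (X : config -> R) : R := \sum_(g : config) X g * Prob g.

Definition sigmaL (s : seq 'I_n) (g : config) : R := \prod_(i <- s) sigma i g.

End Potts.

(** Expanding [exp (J_A delta_A) = 1 + (exp J_A - 1) delta_A] turns the Gibbs
  measure into a Fortuin-Kasteleyn mixture: a set [B] of hyperedges is drawn
  with weight [rho B = prod_(A in B) (exp J_A - 1) * #(colourings constant on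
  every A in B)], and given [B] the colouring is uniform among those constant on
  the clusters of [B]. Hence [<sigma^L> = sum_B rho B phi_L B / sum_B rho B],
  where [phi_L B] is the product over the clusters of the moments [E s^k] of a
  uniform centered spin [s], [k] being the number of entries of [L] in the
  cluster. Odd moments vanish and even ones are supermultiplicative
  (Chebyshev's sum inequality for the comonotone [s^a], [s^b]), so [phi_L]
  grows when clusters merge, i.e. with [B], and [phi_R phi_S <= phi_(R ++ S)].
  The weight [rho] satisfies the FKG ratio condition: [rho (A |: B) / rho B] is
  [exp J_A - 1] times the chance that [A] is monochromatic given [B], which
  grows with [B]. The FKG inequality for [rho] then yields the claim. *)

From HB Require Import structures.
From mathcomp Require Import all_boot all_order all_algebra.
From mathcomp Require Import reals sequences exp.
From mathcomp Require Import ring lra.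
Set Implicit Arguments. Unset Strict Implicit. Unset Printing Implicit Defensive.
Import Order.TTheory GRing.Theory Num.Theory.
Local Open Scope ring_scope.

(** * The FKG inequality on a power set *)

Section FKG.
Variables (R : realFieldType) (T : finType).
Implicit Types (E B : {set T}) (rho f g k : {set T} -> R).

Definition positive_on E rho := forall B, B \subset E -> 0 < rho B.

Definition nondecreasing_on E f :=
  forall B B', B \subset B' -> B' \subset E -> f B <= f B'.

Definition ratio_monotone E rho := forall e B B',
  e \in E -> B \subset B' -> B' \subset E :\ e ->
  rho (e |: B) * rho B' <= rho (e |: B') * rho B.

Definition positively_correlated E rho := forall f g,
  nondecreasing_on E f -> nondecreasing_on E g ->
  (\sum_(B in powerset E) rho B * f B) * (\sum_(B in powerset E) rho B * g B) <=
  (\sum_(B in powerset E) rho B * (f B * g B)) * \sum_(B in powerset E) rho B.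

Lemma big_powersetD1 E e (F : {set T} -> R) : e \in E ->
  \sum_(B in powerset E) F B =
  \sum_(B in powerset (E :\ e)) F B + \sum_(B in powerset (E :\ e)) F (e |: B).
Proof.
move=> eE; rewrite (bigID (fun B => e \in B)) /= addrC; congr (_ + _).
  apply: eq_bigl => B; rewrite !powersetE subsetD1.
  by case: (e \in B); rewrite ?andbF ?andbT.
rewrite (reindex_onto (fun B => e |: B) (fun B => B :\ e)) /=; last first.
  by move=> B /andP [_ eB]; rewrite setD1K.
apply: eq_bigl => B; rewrite !powersetE setU11 andbT; apply/idP/idP.
  case/andP=> sB /eqP <-.
  by rewrite subsetD1 setD11 andbT (subset_trans (subsetDl _ _) sB).
rewrite subsetD1 => /andP [sB eB]; rewrite setU1K // eqxx andbT.
by rewrite subUset sub1set eE (subset_trans sB) // subsetDl.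
Qed.

Lemma sumr_powerset_gt0 E rho :
  positive_on E rho -> 0 < \sum_(B in powerset E) rho B.
Proof.
move=> rp; rewrite (bigD1 set0) ?powersetE ?sub0set //=.
apply: ltr_wpDr; last exact/rp/sub0set.
by apply: sumr_ge0 => B /andP []; rewrite powersetE => sB _; apply/ltW/rp.
Qed.

Lemma subU1D1 E e B : e \in E -> B \subset E :\ e -> e |: B \subset E.
Proof. by move=> eE sB; rewrite subUset sub1set eE (subset_trans sB) ?subsetDl. Qed.

Lemma positive_onD1 E e rho : positive_on E rho -> positive_on (E :\ e) rho.
Proof. by move=> rp B sB; apply/rp/(subset_trans sB)/subsetDl. Qed.

Lemma positive_on_setU1 E e rho : e \in E -> positive_on E rho ->
  positive_on (E :\ e) (fun B => rho (e |: B)).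
Proof. by move=> eE rp B sB; apply/rp/subU1D1. Qed.

Lemma nondecreasing_onD1 E e f :
  nondecreasing_on E f -> nondecreasing_on (E :\ e) f.
Proof. by move=> fi B B' sBB sB'; apply: fi sBB (subset_trans sB' (subsetDl _ _)). Qed.

Lemma nondecreasing_on_setU1 E e f : e \in E -> nondecreasing_on E f ->
  nondecreasing_on (E :\ e) (fun B => f (e |: B)).
Proof. by move=> eE fi B B' sBB sB'; apply: fi; [exact: setUS | exact: subU1D1]. Qed.

Lemma ratio_monotoneD1 E e rho :
  ratio_monotone E rho -> ratio_monotone (E :\ e) rho.
Proof.
move=> rr e' B B' /setD1P [_ e'E] sBB sB'.
by apply: rr e'E sBB (subset_trans sB' _); apply/setSD/subsetDl.
Qed.

Lemma ratio_monotone_setU1 E e rho : e \in E -> ratio_monotone E rho ->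
  ratio_monotone (E :\ e) (fun B => rho (e |: B)).
Proof.
move=> eE rr e' B B' /setD1P [e'e e'E] sBB sB'.
rewrite /= !(setUCA [set e]); apply: rr e'E (setUS _ sBB) _.
rewrite subUset sub1set !inE eq_sym e'e eE (subset_trans sB') //.
by apply/setSD/subsetDl.
Qed.

Lemma ratio_nondecreasing E e rho : e \in E -> positive_on E rho ->
  ratio_monotone E rho -> nondecreasing_on (E :\ e) (fun B => rho (e |: B) / rho B).
Proof.
move=> eE rp rr B B' sBB sB'.
have rB'_gt0 : 0 < rho B' by apply/rp/(subset_trans sB')/subsetDl.
have rB_gt0 : 0 < rho B by apply/rp/(subset_trans sBB)/(subset_trans sB')/subsetDl.
by rewrite ler_pdivrMr // mulrAC ler_pdivlMr //; apply: rr.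
Qed.

(* Averages [x_i = F_i / a_i], [y_i = G_i / a_i] over two blocks with
   [x_0 <= x_1] and [y_0 <= y_1]: this is Chebyshev's inequality for two points. *)
Lemma two_block_correlation (a0 a1 F0 F1 G0 G1 H0 H1 : R) :
  0 < a0 -> 0 < a1 -> F0 * G0 <= H0 * a0 -> F1 * G1 <= H1 * a1 ->
  F0 * a1 <= F1 * a0 -> G0 * a1 <= G1 * a0 ->
  (F0 + F1) * (G0 + G1) <= (H0 + H1) * (a0 + a1).
Proof.
move=> a0_gt0 a1_gt0 h0 h1 hf hg.
set x0 := F0 / a0; set x1 := F1 / a1; set y0 := G0 / a0; set y1 := G1 / a1.
have eF0 : F0 = x0 * a0 by rewrite /x0 divfK // gt_eqF.
have eF1 : F1 = x1 * a1 by rewrite /x1 divfK // gt_eqF.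
have eG0 : G0 = y0 * a0 by rewrite /y0 divfK // gt_eqF.
have eG1 : G1 = y1 * a1 by rewrite /y1 divfK // gt_eqF.
move: h0 h1 hf hg; rewrite eF0 eF1 eG0 eG1 => h0 h1 hf hg.
have hx : x0 <= x1 by rewrite -(ler_pM2r (mulr_gt0 a0_gt0 a1_gt0)); nra.
have hy : y0 <= y1 by rewrite -(ler_pM2r (mulr_gt0 a0_gt0 a1_gt0)); nra.
have h0' : x0 * y0 * a0 <= H0 by rewrite -(ler_pM2r a0_gt0); nra.
have h1' : x1 * y1 * a1 <= H1 by rewrite -(ler_pM2r a1_gt0); nra.
nra.
Qed.

(* Conditioning on [e \in B] raises the mean of a nondecreasing [k]: apply the
   correlation inequality on [E :\ e] to [k] and the nondecreasing ratio
   [rho (e |: B) / rho B]. *)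
Lemma mean_setU1_ge E e rho k : e \in E -> positive_on E rho ->
  ratio_monotone E rho -> positively_correlated (E :\ e) rho ->
  nondecreasing_on E k ->
  (\sum_(B in powerset (E :\ e)) rho B * k B) *
    (\sum_(B in powerset (E :\ e)) rho (e |: B)) <=
  (\sum_(B in powerset (E :\ e)) rho (e |: B) * k (e |: B)) *
    \sum_(B in powerset (E :\ e)) rho B.
Proof.
move=> eE rp rr fkg ki.
set h := fun B => rho (e |: B) / rho B.
have rho_h B : B \in powerset (E :\ e) -> rho B * h B = rho (e |: B).
  by rewrite powersetE => sB; rewrite /h mulrC divfK // gt_eqF // (positive_onD1 rp sB).
have := fkg k h (nondecreasing_onD1 ki) (ratio_nondecreasing eE rp rr).
rewrite (eq_bigr _ rho_h) => /le_trans; apply.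
apply: ler_wpM2r; first exact/ltW/sumr_powerset_gt0/positive_onD1.
apply: ler_sum => B BE; rewrite mulrCA rho_h // mulrC ler_pM2l.
  by apply: ki; [exact: subsetUr | rewrite powersetE in BE; exact: subU1D1].
by apply: (positive_on_setU1 eE rp); rewrite -powersetE.
Qed.

Theorem fkg_inequality E rho :
  positive_on E rho -> ratio_monotone E rho -> positively_correlated E rho.
Proof.
have [m] := ubnP #|E|; elim: m E rho => // m IH E rho.
case: (set_0Vmem E) => [-> _ _ _ f g _ _ | [e eE] ltE rp rr f g fi gi].
  by rewrite powerset0 !big_set1 mulrACA [leRHS]mulrAC.
have ltE' : (#|E :\ e| < m)%N by move: ltE; rewrite (cardsD1 e E) eE.
have fkg0 := IH _ rho ltE' (positive_onD1 rp) (ratio_monotoneD1 rr).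
have fkg1 := IH _ _ ltE' (positive_on_setU1 eE rp) (ratio_monotone_setU1 eE rr).
rewrite !(big_powersetD1 _ eE); apply: two_block_correlation.
- exact/sumr_powerset_gt0/positive_onD1.
- exact/sumr_powerset_gt0/positive_on_setU1.
- exact: fkg0 (nondecreasing_onD1 fi) (nondecreasing_onD1 gi).
- exact: fkg1 (nondecreasing_on_setU1 eE fi) (nondecreasing_on_setU1 eE gi).
- exact: mean_setU1_ge eE rp rr fkg0 fi.
- exact: mean_setU1_ge eE rp rr fkg0 gi.
Qed.

End FKG.

(** * Moments of a uniformly random colour *)

Lemma chebyshev_sum (R : realFieldType) (I : finType) (X Y : I -> R) :
  (forall c d, 0 <= (X c - X d) * (Y c - Y d)) ->
  (\sum_c X c) * (\sum_c Y c) <= #|I|%:R * \sum_c X c * Y c.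
Proof.
move=> comono.
have : 0 <= \sum_c \sum_d (X c - X d) * (Y c - Y d).
  by apply: sumr_ge0 => c _; apply: sumr_ge0.
have expand c : \sum_d (X c - X d) * (Y c - Y d) =
    X c * Y c * #|I|%:R + \sum_d X d * Y d - (X c * \sum_d Y d + Y c * \sum_d X d).
  transitivity (\sum_d (X c * Y c + X d * Y d - (X c * Y d + Y c * X d))).
    by apply: eq_bigr => d _; ring.
  by rewrite sumrB !big_split /= sumr_const -!mulr_sumr mulr_natr.
under eq_bigr do rewrite expand.
rewrite sumrB big_split /= sumr_const big_split /= -!mulr_suml -mulr_natr !mul1r.
move: (\sum_i X i * Y i) (\sum_i X i) (\sum_i Y i) => a b c; lra.
Qed.

Lemma prod_seq_count (R : comPzSemiRingType) (I : finType) (F : I -> R) (s : seq I) :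
  \prod_(i <- s) F i = \prod_j F j ^+ count_mem j s.
Proof.
elim: s => [|x s IH]; first by rewrite big_nil big1 // => j _; rewrite expr0.
rewrite big_cons IH /=; under [RHS]eq_bigr do rewrite exprD.
rewrite big_split /=; congr (_ * _).
rewrite (bigD1 x) //= eqxx expr1 big1 ?mulr1 // => j /negbTE nj.
by rewrite eq_sym nj expr0.
Qed.

Lemma count_sum_mem (I : finType) (P : pred I) (s : seq I) :
  count P s = (\sum_(i | P i) count_mem i s)%N.
Proof.
elim: s => [|x s IH]; first by rewrite big1.
rewrite /= IH big_split /=; congr (_ + _)%N.
rewrite (big_mkcond P) (bigD1 x) //= big1 ?addn0; first by case: (P x); rewrite ?eqxx.
by move=> j /negbTE nj; rewrite eq_sym nj if_same.
Qed.

Section Moments.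
Variables (R : realFieldType) (q n : nat).
Hypothesis q_gt0 : (0 < q)%N.
Implicit Types (u : 'I_q -> R) (L : seq 'I_n).

Definition moment u k : R := (\sum_(c : 'I_q) u c ^+ k) / q%:R.

Definition list_moment u L : R := \prod_(j : 'I_n) moment u (count_mem j L).

Lemma natr_q_neq0 : (q%:R : R) != 0.
Proof. by rewrite pnatr_eq0 -lt0n. Qed.

Lemma moment0 u : moment u 0 = 1.
Proof.
rewrite /moment; under eq_bigr do rewrite expr0.
by rewrite sumr_const card_ord -mulr_natl mulr1 divff // natr_q_neq0.
Qed.

Lemma sum_ffun_prod_seq u L :
  \sum_(g : {ffun 'I_n -> 'I_q}) \prod_(i <- L) u (g i) = q%:R ^+ n * list_moment u L.
Proof.
under eq_bigr do rewrite prod_seq_count.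
rewrite -(bigA_distr_bigA (fun j c => u c ^+ count_mem j L)) /=.
have -> : (q%:R : R) ^+ n = \prod_(j : 'I_n) (q%:R : R) by rewrite prodr_const card_ord.
rewrite /list_moment /moment -big_split /=.
by apply: eq_bigr => j _; rewrite mulrC divfK // natr_q_neq0.
Qed.

Variable u : 'I_q -> R.
Hypotheses (moment_ge0 : forall k, 0 <= moment u k)
  (moment_supermul : forall a b, moment u a * moment u b <= moment u (a + b)).

Lemma list_moment_cat L1 L2 :
  list_moment u L1 * list_moment u L2 <= list_moment u (L1 ++ L2).
Proof.
rewrite /list_moment -big_split /=; apply: ler_prod => j _.
by rewrite count_cat mulr_ge0 ?moment_supermul.
Qed.

(* [map f] adds up the multiplicities of sites with the same image. *)
Lemma list_moment_map (f : 'I_n -> 'I_n) L : list_moment u L <= list_moment u (map f L).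
Proof.
rewrite /list_moment (partition_big f xpredT) //=.
apply: ler_prod => j _; rewrite count_map count_sum_mem.
elim/big_rec2: _ => [|i y1 y2 _ /andP [y1_ge0 y1_le]]; first by rewrite moment0 ler01 lexx.
rewrite mulr_ge0 //=; apply: le_trans (moment_supermul _ _).
by rewrite ler_wpM2l.
Qed.

End Moments.

Lemma even_powers_comonotone (R : realDomainType) (x y : R) a b :
  ~~ odd a -> ~~ odd b -> 0 <= (x ^+ a - y ^+ a) * (x ^+ b - y ^+ b).
Proof.
move=> /negbTE ea /negbTE eb.
rewrite -(odd_double_half a) -(odd_double_half b) ea eb !add0n -!mul2n !exprM.
have [x2_ge0 y2_ge0] := (sqr_ge0 x, sqr_ge0 y).
case: (leP (x ^+ 2) (y ^+ 2)) => h.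
  by apply: mulr_le0; rewrite subr_le0 lerXn2r // ?ltW.
by apply: mulr_ge0; rewrite subr_ge0 lerXn2r // ltW.
Qed.

Section SpinMoments.
Variables (R : realType) (q : nat).
Hypothesis q_gt0 : (0 < q)%N.

Lemma spin_rev_ord (k : 'I_q) : spin R (rev_ord k) = - spin R k.
Proof.
rewrite /spin /= natrB ?ltn_ord // -addn1 natrD.
have := splitr (q%:R - 1 : R); lra.
Qed.

Lemma sum_spin_odd k : odd k -> \sum_(c : 'I_q) spin R c ^+ k = 0.
Proof.
move=> ok.
have : \sum_(c : 'I_q) spin R c ^+ k = - \sum_(c : 'I_q) spin R c ^+ k.
  rewrite {1}(reindex_inj rev_ord_inj) /= -sumrN; apply: eq_bigr => c _.
  by rewrite spin_rev_ord exprNn -signr_odd ok expr1 mulN1r.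
lra.
Qed.

Lemma moment_spin_ge0 k : 0 <= moment (@spin R q) k.
Proof.
rewrite /moment; case ok: (odd k); first by rewrite sum_spin_odd // mul0r.
apply: divr_ge0; last exact: ler0n.
by apply: sumr_ge0 => c _; apply: exprn_even_ge0; rewrite ok.
Qed.

Lemma moment_spin_supermul a b :
  moment (@spin R q) a * moment (@spin R q) b <= moment (@spin R q) (a + b).
Proof.
case oa: (odd a); first by rewrite {1}/moment sum_spin_odd // !mul0r moment_spin_ge0.
case ob: (odd b); first by rewrite {2}/moment sum_spin_odd // mul0r mulr0 moment_spin_ge0.
rewrite /moment mulrACA -invfM ler_pdivrMr; last by rewrite mulr_gt0 // ltr0n.
rewrite mulrA divfK ?natr_q_neq0 //.
under [X in _ <= X * _]eq_bigr do rewrite exprD.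
rewrite [X in _ <= X]mulrC -[X in X%:R](card_ord q); apply: chebyshev_sum => c d.
by apply: even_powers_comonotone; rewrite ?oa ?ob.
Qed.

End SpinMoments.

Section ColourIndicator.
Variables (R : realFieldType) (q : nat).
Hypothesis q_gt0 : (0 < q)%N.

Definition colour_ind (c d : 'I_q) : R := (d == c)%:R.

Lemma moment_colour_ind c k : moment (colour_ind c) k = if k == 0%N then 1 else q%:R^-1.
Proof.
case: eqP => [->|/eqP k0]; first exact: moment0.
rewrite /moment /colour_ind (bigD1 c) //= eqxx expr1n big1 ?addr0 ?mul1r //.
by move=> d /negbTE ->; rewrite expr0n (negbTE k0).
Qed.

Lemma moment_colour_ind_ge0 c k : 0 <= moment (colour_ind c) k.
Proof. by rewrite moment_colour_ind; case: eqP => _ //; rewrite invr_ge0 ler0n. Qed.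

Lemma moment_colour_ind_supermul c a b :
  moment (colour_ind c) a * moment (colour_ind c) b <= moment (colour_ind c) (a + b).
Proof.
rewrite !moment_colour_ind addn_eq0; case: eqP => _; rewrite ?mul1r //=.
case: eqP => _; rewrite ?mulr1 //=.
by rewrite ger_pMl ?invr_gt0 ?ltr0n // invf_le1 ?ltr0n // ler1n.
Qed.

End ColourIndicator.

(** * Clusters of a set of hyperedges *)

Section Clusters.
Variables (q n : nat).
Implicit Types (B : {set {set 'I_n}}) (A : {set 'I_n}) (g : config q n).

Definition cluster_rel B : rel 'I_n := fun i j => [exists A in B, (i \in A) && (j \in A)].

Lemma cluster_rel_sym B : connect_sym (cluster_rel B).
Proof.
apply: sym_connect_sym => i j.
by apply/existsP/existsP => -[A /and3P [AB iA jA]]; exists A; rewrite AB iA jA.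
Qed.

Definition cluster_root B i := fingraph.root (cluster_rel B) i.

Lemma cluster_rootK B i : cluster_root B (cluster_root B i) = cluster_root B i.
Proof. by rewrite /cluster_root root_root //; apply: cluster_rel_sym. Qed.

Lemma cluster_root_edge B A i j :
  A \in B -> i \in A -> j \in A -> cluster_root B i = cluster_root B j.
Proof.
move=> AB iA jA; apply/eqP; rewrite /cluster_root root_connect; last exact: cluster_rel_sym.
by apply: connect1; apply/existsP; exists A; rewrite AB iA jA.
Qed.

Lemma cluster_root_sub B B' i :
  B \subset B' -> cluster_root B' (cluster_root B i) = cluster_root B' i.
Proof.
move=> sB; apply/eqP; rewrite /cluster_root root_connect; last exact: cluster_rel_sym.
rewrite (cluster_rel_sym B').
apply: (connect_sub (e := cluster_rel B)); last exact: connect_root.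
move=> x y /existsP [A /andP [AB xy]]; apply: connect1; apply/existsP; exists A.
by rewrite (subsetP sB).
Qed.

Definition constant_on A g := [forall i in A, forall j in A, g i == g j].

Lemma cluster_root_const B g :
  (forall A, A \in B -> constant_on A g) -> forall i, g (cluster_root B i) = g i.
Proof.
move=> gB i.
have cl : fingraph.closed (cluster_rel B) [pred z | g z == g i].
  move=> x y /existsP [A /and3P [AB xA yA]] /=.
  by move: (gB A AB) => /forall_inP /(_ x xA) /forall_inP /(_ y yA) /eqP gxy; rewrite !inE gxy.
by have := closed_connect cl (connect_root (cluster_rel B) i); rewrite !inE eqxx => /esym/eqP.
Qed.

Definition cluster_proj B g : config q n := [ffun i => g (cluster_root B i)].

Lemma cluster_projK B g : cluster_proj B (cluster_proj B g) = cluster_proj B g.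
Proof. by apply/ffunP => i; rewrite !ffunE cluster_rootK. Qed.

Lemma cluster_proj_fixE B g :
  (cluster_proj B g == g) = [forall A in B, constant_on A g].
Proof.
apply/eqP/forall_inP => [gK A AB | gB].
  apply/forall_inP => i iA; apply/forall_inP => j jA.
  by rewrite -gK !ffunE (cluster_root_edge AB iA jA).
by apply/ffunP => i; rewrite ffunE cluster_root_const.
Qed.

Definition proj_fibre B g' := [set g | cluster_proj B g == g'].

(* Overwriting the roots with the colours of [g2] maps the fibre of [g1] into
   that of [g2], injectively. *)
Lemma card_proj_fibre_le B g1 g2 : cluster_proj B g1 = g1 -> cluster_proj B g2 = g2 ->
  (#|proj_fibre B g1| <= #|proj_fibre B g2|)%N.
Proof.
move=> g1K g2K.
pose tau g : config q n := [ffun i => if cluster_root B i == i then g2 i else g i].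
have <- : #|tau @: proj_fibre B g1| = #|proj_fibre B g1|.
  apply: card_in_imset => ga gb; rewrite !inE => /eqP ea /eqP eb eab.
  apply/ffunP => i; have := congr1 (fun h : config q n => h i) eab; rewrite !ffunE.
  case: eqP => [ri _|//].
  have := congr1 (fun h : config q n => h i) ea; have := congr1 (fun h : config q n => h i) eb.
  by rewrite !ffunE ri => -> ->.
apply/subset_leq_card/subsetP => g /imsetP [g0 _ ->]; rewrite inE.
apply/eqP/ffunP => i; rewrite !ffunE cluster_rootK eqxx -g2K ffunE.
by rewrite ffunE cluster_rootK.
Qed.

Lemma card_proj_fibre B (gr : config q n) g' : cluster_proj B gr = gr ->
  #|proj_fibre B g'| = ((cluster_proj B g' == g') * #|proj_fibre B gr|)%N.
Proof.
move=> grK; case: eqP => [g'K|g'N].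
  by rewrite mul1n; apply/eqP; rewrite eqn_leq !card_proj_fibre_le.
rewrite mul0n; apply/eqP; rewrite cards_eq0; apply/eqP/setP => g; rewrite !inE.
by apply/negbTE/eqP => eg; apply: g'N; rewrite -eg cluster_projK.
Qed.

End Clusters.

(** * Sums over the colourings compatible with a set of hyperedges *)

Section CompatibleSums.
Variables (R : realType) (q n : nat).
Hypothesis q_gt0 : (0 < q)%N.
Implicit Types (B : {set {set 'I_n}}) (A : {set 'I_n}) (g : config q n).

Lemma spin_inj : injective (@spin R q).
Proof.
move=> a b /eqP; rewrite /spin -subr_eq0 opprB addrA subrK subr_eq0 eqr_nat.
by move/eqP/val_inj.
Qed.

Lemma deltaE A g : delta R A g = (constant_on A g)%:R.
Proof.
rewrite /delta; have -> : [forall i in A, forall j in A, sigma R i g == sigma R j g] = constant_on A g.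
  apply: eq_forallb => i; congr (_ ==> _); apply: eq_forallb => j; congr (_ ==> _).
  by rewrite /sigma (inj_eq spin_inj).
by case: (constant_on A g).
Qed.

Definition deltaB B g : R := \prod_(A in B) delta R A g.

Lemma deltaBE B g : deltaB B g = (cluster_proj B g == g)%:R.
Proof.
rewrite cluster_proj_fixE /deltaB; case: forall_inP => [gB | /forall_inP].
  by rewrite big1 // => A AB; rewrite deltaE gB.
rewrite negb_forall_in => /exists_inP [A AB nA].
by rewrite (bigD1 A) //= deltaE (negbTE nA) mul0r.
Qed.

Definition compatible_count B : R := \sum_g deltaB B g.

Lemma sum_cluster_proj_fibre B (X : config q n -> R) :
  \sum_g X (cluster_proj B g) = \sum_(g' : config q n) X g' * #|proj_fibre B g'|%:R.
Proof.
rewrite (partition_big (cluster_proj B) xpredT) //=; apply: eq_bigr => g' _.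
rewrite (eq_bigr (fun _ => X g')); last by move=> g /eqP ->.
rewrite sumr_const [RHS]mulr_natr; congr (_ *+ _).
by rewrite /proj_fibre cardsE; apply: eq_card.
Qed.

Lemma sum_cluster_proj B (gr : config q n) (X : config q n -> R) : cluster_proj B gr = gr ->
  \sum_g X (cluster_proj B g) = #|proj_fibre B gr|%:R * \sum_g deltaB B g * X g.
Proof.
move=> grK; rewrite sum_cluster_proj_fibre mulr_sumr; apply: eq_bigr => g' _.
by rewrite (card_proj_fibre _ grK) natrM deltaBE; ring.
Qed.

Lemma natr_qn_neq0 : (q%:R : R) ^+ n != 0.
Proof. exact/expf_neq0/natr_q_neq0. Qed.

(* All nonempty fibres of [cluster_proj B] have the same size, so the compatible
   colourings are, up to a common factor, the images of all colourings. *)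
Lemma sum_deltaB_mulr B (X : config q n -> R) :
  (\sum_g deltaB B g * X g) * q%:R ^+ n =
  compatible_count B * \sum_g X (cluster_proj B g).
Proof.
pose g0 : config q n := cluster_proj B [ffun=> Ordinal q_gt0].
have g0K : cluster_proj B g0 = g0 by rewrite /g0 cluster_projK.
have count_configs : \sum_(g : config q n) (1 : R) = q%:R ^+ n.
  by rewrite sumr_const card_ffun !card_ord natrX.
have := sum_cluster_proj (fun _ => 1) g0K; rewrite count_configs => ->.
have -> : \sum_g deltaB B g * 1 = compatible_count B.
  by apply: eq_bigr => g _; rewrite mulr1.
by rewrite (sum_cluster_proj X g0K); ring.
Qed.

Lemma compatible_count_gt0 B : 0 < compatible_count B.
Proof.
pose g0 : config q n := cluster_proj B [ffun=> Ordinal q_gt0].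
rewrite /compatible_count (bigD1 g0) //= deltaBE /g0 cluster_projK eqxx.
apply: ltr_wpDr; last exact: ltr01.
by apply: sumr_ge0 => g _; rewrite deltaBE ler0n.
Qed.

Lemma sum_deltaB_sigmaL B (L : seq 'I_n) :
  \sum_g deltaB B g * sigmaL R L g =
  compatible_count B * list_moment (@spin R q) (map (cluster_root B) L).
Proof.
apply: (mulIf natr_qn_neq0); rewrite sum_deltaB_mulr -mulrA; congr (_ * _).
have proj_sigmaL g : sigmaL R L (cluster_proj B g) =
    \prod_(i <- map (cluster_root B) L) spin R (g i).
  by rewrite /sigmaL big_map; apply: eq_bigr => i _; rewrite /sigma ffunE.
under eq_bigr do rewrite proj_sigmaL.
by rewrite sum_ffun_prod_seq // mulrC.
Qed.

Lemma prod_colour_ind (s : seq 'I_n) (c : 'I_q) g :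
  \prod_(i <- s) colour_ind R c (g i) = (all (fun i => g i == c) s)%:R.
Proof.
elim: s => [|x s IH]; first by rewrite big_nil.
by rewrite big_cons IH /= /colour_ind -natrM mulnb.
Qed.

Lemma delta_sum_colour_ind A g : (0 < #|A|)%N ->
  delta R A g = \sum_(c : 'I_q) \prod_(i <- enum A) colour_ind R c (g i).
Proof.
rewrite card_gt0 => /set0Pn [i0 i0A].
under eq_bigr do rewrite prod_colour_ind.
have allE c : all (fun i => g i == c) (enum A) = constant_on A g && (g i0 == c).
  apply/allP/andP => [gc | [/forall_inP gA /eqP <-] i].
    have gic i : i \in A -> g i = c by move=> iA; apply/eqP/gc; rewrite mem_enum.
    split; last by rewrite gic.
    by apply/forall_inP => i iA; apply/forall_inP => j jA; rewrite !gic.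
  by rewrite mem_enum => iA; have /forall_inP := gA i iA; apply.
under eq_bigr do rewrite allE.
rewrite deltaE; case: (constant_on A g) => /=; last by rewrite big1.
by rewrite (bigD1 (g i0)) //= eqxx big1 ?addr0 // => c /negbTE; rewrite eq_sym => ->.
Qed.

Lemma sum_deltaB_delta B A : (0 < #|A|)%N ->
  \sum_g deltaB B g * delta R A g = compatible_count B *
    \sum_(c : 'I_q) list_moment (colour_ind R c) (map (cluster_root B) (enum A)).
Proof.
move=> A_gt0; apply: (mulIf natr_qn_neq0).
rewrite sum_deltaB_mulr -mulrA; congr (_ * _).
have proj_delta g : delta R A (cluster_proj B g) =
    \sum_(c : 'I_q) \prod_(i <- map (cluster_root B) (enum A)) colour_ind R c (g i).
  rewrite delta_sum_colour_ind //; apply: eq_bigr => c _.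
  by rewrite big_map; apply: eq_bigr => i _; rewrite ffunE.
under eq_bigr do rewrite proj_delta.
rewrite exchange_big mulr_suml; apply: eq_bigr => c _.
by rewrite sum_ffun_prod_seq // mulrC.
Qed.

End CompatibleSums.

(** * The Fortuin-Kasteleyn representation *)

Section FKRepresentation.
Variables (R : realType) (q n : nat) (J : {set 'I_n} -> R).
Hypotheses (q_gt0 : (0 < q)%N) (J_ge0 : forall A : {set 'I_n}, (1 < #|A|)%N -> 0 <= J A).
Implicit Types (B : {set {set 'I_n}}) (A : {set 'I_n}) (L : seq 'I_n) (g : config q n).

Definition fk_weight A : R := if (1 < #|A|)%N then expR (J A) - 1 else 0.

(* Hyperedges of weight zero are left out, so that the measure below is positive. *)
Definition active_edges := [set A : {set 'I_n} | (1 < #|A|)%N && (0 < J A)].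

Definition fk_prod B : R := \prod_(A in B) fk_weight A.

Definition fk_measure B : R := fk_prod B * compatible_count R q B.

Definition cluster_moment L B : R := list_moment (@spin R q) (map (cluster_root B) L).

(* The chance that [A] is monochromatic in a uniform colouring compatible with
   [B] (see [compatible_count_setU1]). *)
Definition monochrome_moment B A : R :=
  \sum_(c : 'I_q) list_moment (colour_ind R c) (map (cluster_root B) (enum A)).

Lemma fk_weight_gt0 A : A \in active_edges -> 0 < fk_weight A.
Proof. by rewrite inE /fk_weight => /andP [-> JA_gt0]; rewrite subr_gt0 expR_gt1. Qed.

Lemma fk_prod_gt0 B : B \subset active_edges -> 0 < fk_prod B.
Proof. by move=> sB; apply: prodr_gt0 => A AB; apply/fk_weight_gt0/(subsetP sB). Qed.

Lemma fk_prod_eq0 B : ~~ (B \subset active_edges) -> fk_prod B = 0.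
Proof.
case/subsetPn => A AB nA; rewrite /fk_prod (bigD1 A) //= [fk_weight A](_ : _ = 0) ?mul0r //.
move: nA; rewrite inE /fk_weight; case: ifP => //= A_gt1 JA_le0.
have -> : J A = 0 by apply/eqP; rewrite eq_le J_ge0 // andbT leNgt JA_le0.
by rewrite expR0 subrr.
Qed.

Lemma Zg_fk_expansion g :
  Zg J g = \sum_(B in powerset active_edges) fk_prod B * deltaB R B g.
Proof.
rewrite /Zg /Ham opprK expR_sum.
have expR_delta A : (1 < #|A|)%N ->
    expR (J A * delta R A g) = fk_weight A * delta R A g + 1.
  move=> A_gt1; rewrite /fk_weight A_gt1 deltaE; case: (constant_on A g) => /=.
    by rewrite !mulr1 subrK.
  by rewrite !mulr0 expR0 add0r.
rewrite (eq_bigr _ expR_delta) big_mkcond /=.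
rewrite (eq_bigr (fun A => fk_weight A * delta R A g + 1)); last first.
  by move=> A _; case: ifP => // A_le1; rewrite /fk_weight A_le1 mul0r add0r.
rewrite bigA_distr /= (bigID (fun B => B \in powerset active_edges)) /=.
rewrite [X in _ + X]big1 ?addr0 => [|B]; last first.
  by rewrite powersetE => nB; rewrite -big_mkcond /= big_split /= -/(fk_prod B) fk_prod_eq0 ?mul0r.
by apply: eq_bigr => B _; rewrite -big_mkcond /= big_split.
Qed.

Lemma sum_Zg_sigmaL L : \sum_(g : config q n) Zg J g * sigmaL R L g =
  \sum_(B in powerset active_edges) fk_measure B * cluster_moment L B.
Proof.
under eq_bigr do rewrite Zg_fk_expansion mulr_suml.
rewrite exchange_big /=; apply: eq_bigr => B _.
rewrite /fk_measure /cluster_moment -mulrA -sum_deltaB_sigmaL // mulr_sumr.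
by apply: eq_bigr => g _; ring.
Qed.

Lemma Zpart_fk : Zpart q J = \sum_(B in powerset active_edges) fk_measure B.
Proof.
rewrite /Zpart; under eq_bigr do rewrite Zg_fk_expansion.
by rewrite exchange_big /=; apply: eq_bigr => B _; rewrite /fk_measure mulr_sumr.
Qed.

Lemma expect_fk L : @expect R q n J (sigmaL R L) =
  (\sum_(B in powerset active_edges) fk_measure B * cluster_moment L B) /
  \sum_(B in powerset active_edges) fk_measure B.
Proof.
rewrite -sum_Zg_sigmaL -Zpart_fk /expect /Prob mulr_suml.
by apply: eq_bigr => g _; rewrite mulrCA mulrA.
Qed.

Lemma expect_sigmaL_mul L1 L2 :
  @expect R q n J (fun g => sigmaL R L1 g * sigmaL R L2 g) = @expect R q n J (sigmaL R (L1 ++ L2)).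
Proof. by apply: eq_bigr => g _; rewrite /sigmaL big_cat. Qed.

Lemma fk_measure_positive : positive_on active_edges fk_measure.
Proof. by move=> B sB; rewrite mulr_gt0 ?fk_prod_gt0 ?compatible_count_gt0. Qed.

Lemma compatible_count_setU1 B A : A \notin B -> (0 < #|A|)%N ->
  compatible_count R q (A |: B) = compatible_count R q B * monochrome_moment B A.
Proof.
move=> AB A_gt0; rewrite /compatible_count -sum_deltaB_delta //.
by apply: eq_bigr => g _; rewrite /deltaB big_setU1 //= mulrC.
Qed.

Lemma map_cluster_root_sub B B' L : B \subset B' ->
  map (cluster_root B') L = map (cluster_root B') (map (cluster_root B) L).
Proof. by move=> sB; rewrite -map_comp; apply: eq_map => i /=; rewrite cluster_root_sub. Qed.

Lemma monochrome_moment_sub B B' A :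
  B \subset B' -> monochrome_moment B A <= monochrome_moment B' A.
Proof.
move=> sB; apply: ler_sum => c _; rewrite (map_cluster_root_sub _ sB).
apply: list_moment_map => //; [exact: moment_colour_ind_ge0 | exact: moment_colour_ind_supermul].
Qed.

Lemma cluster_moment_nondecreasing L : nondecreasing_on active_edges (cluster_moment L).
Proof.
move=> B B' sB _; rewrite /cluster_moment (map_cluster_root_sub _ sB).
apply: list_moment_map => //; [exact: moment_spin_ge0 | exact: moment_spin_supermul].
Qed.

Lemma fk_measure_ratio_monotone : ratio_monotone active_edges fk_measure.
Proof.
move=> A B B' A_active sBB sB'.
have AB' : A \notin B' by apply/negP => /(subsetP sB'); rewrite !inE eqxx.
have AB : A \notin B by apply: contra AB'; apply: (subsetP sBB).
have A_gt0 : (0 < #|A|)%N by move: A_active; rewrite inE => /andP [/ltnW].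
have sB'E : B' \subset active_edges by apply: subset_trans sB' (subsetDl _ _).
have sBE : B \subset active_edges by apply: subset_trans sBB sB'E.
rewrite /fk_measure /fk_prod !big_setU1 // !compatible_count_setU1 // -!/(fk_prod _).
set K := fk_weight A * fk_prod B * compatible_count R q B * fk_prod B' * compatible_count R q B'.
have -> : fk_weight A * fk_prod B * (compatible_count R q B * monochrome_moment B A) *
  (fk_prod B' * compatible_count R q B') = K * monochrome_moment B A by rewrite /K; ring.
have -> : fk_weight A * fk_prod B' * (compatible_count R q B' * monochrome_moment B' A) *
  (fk_prod B * compatible_count R q B) = K * monochrome_moment B' A by rewrite /K; ring.
apply: ler_wpM2l; last exact: monochrome_moment_sub.
by rewrite /K !mulr_ge0 // ltW ?fk_weight_gt0 ?fk_prod_gt0 ?compatible_count_gt0.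
Qed.

Lemma fk_correlation Rl Sl :
  (\sum_(B in powerset active_edges) fk_measure B * cluster_moment Rl B) *
  (\sum_(B in powerset active_edges) fk_measure B * cluster_moment Sl B) <=
  (\sum_(B in powerset active_edges) fk_measure B * cluster_moment (Rl ++ Sl) B) *
  \sum_(B in powerset active_edges) fk_measure B.
Proof.
apply: le_trans (fkg_inequality fk_measure_positive fk_measure_ratio_monotone
  (cluster_moment_nondecreasing Rl) (cluster_moment_nondecreasing Sl)) _.
apply/ler_wpM2r/ler_sum => [|B]; first exact/ltW/sumr_powerset_gt0/fk_measure_positive.
rewrite powersetE => sB; apply/ler_wpM2l; first exact/ltW/fk_measure_positive.
rewrite /cluster_moment map_cat.
by apply: list_moment_cat; [exact: moment_spin_ge0 | exact: moment_spin_supermul].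
Qed.

End FKRepresentation.

Lemma ler_mean_prod (R : numFieldType) (x y z a : R) :
  x * y <= z * a -> 0 < a -> x / a * (y / a) <= z / a.
Proof.
move=> xy_le a_gt0; rewrite mulrACA -invfM ler_pdivrMr ?mulr_gt0 //.
by rewrite mulrA divfK ?gt_eqF.
Qed.

Theorem theorem2 (R : realType) (q n : nat) (hq : (2 <= q)%N) (hn : (1 <= n)%N)
  (J : {set 'I_n} -> R) (hJ : forall A : {set 'I_n}, (1 < #|A|)%N -> 0 <= J A)
  (Rl Sl : seq 'I_n) :
  0 <= @expect R q n J (fun g => @sigmaL R q n Rl g * @sigmaL R q n Sl g)
       - @expect R q n J (@sigmaL R q n Rl) * @expect R q n J (@sigmaL R q n Sl).
Proof.
have q_gt0 : (0 < q)%N by apply: leq_trans hq.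
rewrite expect_sigmaL_mul !(expect_fk q_gt0 hJ) subr_ge0.
apply: ler_mean_prod; first by apply: fk_correlation.
by apply: sumr_powerset_gt0; apply: fk_measure_positive.
Qed.
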